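(* Let $\mathbf{X}$ be an $\mathbf{I}$-separated structure with universe $X$ and let $\{L,U\}$ be a partition of $X$. Then the characteristic function of $U$ is a homomorphism from $\mathbf{X}$ into $\mathbf{I}$ if and only if for every finite $s\subseteq U$ and every finite $t\subseteq L$ we have $s\not\sqsubseteq t$.
   Context: $\mathbf{I}$ is the structure with universe $\{0,1\}$ and, for all $n,m\in\mathbb N$ (including $0$), an $(n+m)$-ary relation $I_{n,m}$ given by $I_{n,m}(a_0,\dots,a_{n-1},b_0,\dots,b_{m-1})\iff \min_{i<n}a_i\le\max_{j<m}b_j$, with $\min\emptyset=1$, $\max\emptyset=0$. A structure is $\mathbf{I}$-separated if it embeds into some power of $\mathbf{I}$. For a structure in the language $\{I_{n,m}\}$ and finite subsets $a=\{s_0,\dots,s_{n-1}\}$, $b=\{t_0,\dots,t_{m-1}\}$ of its universe, $a\sqsubseteq b$ means $I_{n,m}(s_0,\dots,s_{n-1},t_0,\dots,t_{m-1})$. A homomorphism into $\mathbf{I}$ is a map preserving all $I_{n,m}$. *)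

From mathcomp Require Import all_boot.
Set Implicit Arguments. Unset Strict Implicit. Unset Printing Implicit Defensive.

(* A structure in the language {I_{n,m} : n,m in nat}: a carrier X together with,
   for all n m, an (n+m)-ary relation, whose arguments are given as a pair of
   tuples a : 'I_n -> X (first n arguments) and b : 'I_m -> X (last m). *)
Definition lang_rel (X : Type) :=
  forall n m : nat, ('I_n -> X) -> ('I_m -> X) -> Prop.

(* The two-element structure I, universe {0,1} encoded as bool (false = 0,
   true = 1).  min over the empty family is 1 (= true), max over the empty
   family is 0 (= false). *)
Definition Imin n (a : 'I_n -> bool) : bool := \big[andb/true]_(i < n) a i.
Definition Imax m (b : 'I_m -> bool) : bool := \big[orb/false]_(j < m) b j.
Definition Irel : lang_rel bool := fun n m a b => (Imin a <= Imax b)%N.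

Definition Ipow_rel (K : Type) : lang_rel (K -> bool) :=
  fun n m a b => forall k : K, Irel (fun i => a i k) (fun j => b j k).

Definition embedding (X Y : Type) (RX : lang_rel X) (RY : lang_rel Y) (f : X -> Y) :=
  injective f /\
  forall n m (a : 'I_n -> X) (b : 'I_m -> X),
    RX n m a b <-> RY n m (fun i => f (a i)) (fun j => f (b j)).

Definition I_separated (X : Type) (R : lang_rel X) :=
  exists (K : Type) (f : X -> (K -> bool)), embedding R (@Ipow_rel K) f.

Definition hom_into_I (X : Type) (R : lang_rel X) (h : X -> bool) :=
  forall n m (a : 'I_n -> X) (b : 'I_m -> X),
    R n m a b -> Irel (fun i => h (a i)) (fun j => h (b j)).

(* a ⊑ b for finite subsets s = {a_0,...,a_{n-1}}, t = {b_0,...,b_{m-1}},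
   given by injective enumerations. *)
Definition sqsub (X : Type) (R : lang_rel X) n m (a : 'I_n -> X) (b : 'I_m -> X) :=
  R n m a b.

From mathcomp Require Import all_boot.
From Stdlib Require Import Classical.
Set Implicit Arguments. Unset Strict Implicit. Unset Printing Implicit Defensive.

(* Whether a tuple relation of an I-separated structure holds depends only on
   the sets of entries of the two tuples, because this is so in I (a min over
   a family and a max over a family only see its range) and hence coordinatewise
   in every power of I.  So a tuple may be replaced by an injective enumeration
   of its entries.  If the characteristic function of U is not a homomorphism,
   some related pair has all left entries in U and all right entries outside U,
   i.e. in L; enumerating these entries injectively yields finite s in U and
   t in L with s below t.  Conversely such s and t contradict the
   homomorphism condition directly. *)

Definition same_range (X : Type) n n' (a : 'I_n -> X) (a' : 'I_n' -> X) :=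
  forall x, (exists i, a i = x) <-> (exists i, a' i = x).

Lemma same_range_comp (X Y : Type) (f : X -> Y) n n'
    (a : 'I_n -> X) (a' : 'I_n' -> X) :
  same_range a a' -> same_range (fun i => f (a i)) (fun i => f (a' i)).
Proof.
move=> eq_a y; split=> -[i <-].
  have [i' <-] : exists i', a' i' = a i by apply/eq_a; exists i.
  by exists i'.
have [i' <-] : exists i', a i' = a' i by apply/eq_a; exists i.
by exists i'.
Qed.

Lemma IminP n (a : 'I_n -> bool) : reflect (forall i, a i) (Imin a).
Proof.
rewrite /Imin big_all; apply: (iffP allP) => [a_all i | a_all i _].
  by apply: a_all; rewrite mem_index_enum.
exact: a_all.
Qed.

Lemma ImaxP m (b : 'I_m -> bool) : reflect (exists j, b j) (Imax b).
Proof.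
rewrite /Imax big_has; apply: (iffP hasP) => [[j _ bj] | [j bj]].
  by exists j.
by exists j; rewrite ?mem_index_enum.
Qed.

Lemma IrelP n m (a : 'I_n -> bool) (b : 'I_m -> bool) :
  Irel a b <-> ((forall i, a i) -> exists j, b j).
Proof.
rewrite /Irel; split=> [le_ab a_all | ab].
  by apply/ImaxP; move: le_ab; rewrite (introT (IminP a) a_all); case: (Imax b).
by case: (IminP a) => // /ab /ImaxP ->.
Qed.

Lemma Irel_same_range n m n' m' (a : 'I_n -> bool) (b : 'I_m -> bool)
    (a' : 'I_n' -> bool) (b' : 'I_m' -> bool) :
  same_range a a' -> same_range b b' -> Irel a b -> Irel a' b'.
Proof.
move=> eq_a eq_b /IrelP ab; apply/IrelP => a'_all.
have [j bj] : exists j, b j.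
  apply: ab => i; have [i' <-] : exists i', a' i' = a i by apply/eq_a; exists i.
  exact: a'_all.
have [j' b'_j'] : exists j', b' j' = b j by apply/eq_b; exists j.
by exists j'; rewrite b'_j'.
Qed.

Lemma Ipow_rel_same_range (K : Type) n m n' m' (a : 'I_n -> K -> bool)
    (b : 'I_m -> K -> bool) (a' : 'I_n' -> K -> bool) (b' : 'I_m' -> K -> bool) :
  same_range a a' -> same_range b b' -> Ipow_rel a b -> Ipow_rel a' b'.
Proof.
move=> eq_a eq_b ab k.
exact: (Irel_same_range (same_range_comp (fun g => g k) eq_a)
                        (same_range_comp (fun g => g k) eq_b) (ab k)).
Qed.

Lemma I_separated_same_range (X : Type) (R : lang_rel X) n m n' m'
    (a : 'I_n -> X) (b : 'I_m -> X) (a' : 'I_n' -> X) (b' : 'I_m' -> X) :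
  I_separated R -> same_range a a' -> same_range b b' -> R n m a b -> R n' m' a' b'.
Proof.
move=> [K [f [_ f_emb]]] eq_a eq_b /f_emb ab; apply/f_emb.
exact: (Ipow_rel_same_range (same_range_comp f eq_a) (same_range_comp f eq_b) ab).
Qed.

Lemma exists_ordS n (P : 'I_n.+1 -> Prop) :
  (exists i, P i) <-> P ord0 \/ exists i, P (lift ord0 i).
Proof.
split=> [[i Pi] | [P0 | [i Pi]]]; last by exists (lift ord0 i).
  by case: (unliftP ord0 i) Pi => [j -> | ->]; [right; exists j | left].
by exists ord0.
Qed.

Lemma exists_injective_same_range (X : Type) n (a : 'I_n -> X) :
  exists n' (c : 'I_n' -> X), injective c /\ same_range a c.
Proof.
elim: n a => [|n IHn] a.
  by exists 0, a; split=> [[] | x].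
have [n' [c [inj_c eq_c]]] := IHn (fun i => a (lift ord0 i)).
(* X has no decidable equality, so whether [a ord0] repeats is decided classically. *)
case: (classic (exists i, c i = a ord0)) => [[i0 c_i0] | a0_new].
  exists n', c; split=> // x; rewrite exists_ordS; split.
    by case=> [<- | /eq_c //]; exists i0.
  by move/eq_c; right.
pose c' i := if unlift ord0 i is Some j then c j else a ord0.
exists n'.+1, c'; split.
  move=> i1 i2; rewrite /c'.
  case: (unliftP ord0 i1) => [j1 -> | ->]; case: (unliftP ord0 i2) => [j2 -> | ->];
    rewrite ?liftK ?unlift_none //.
  - by move/inj_c ->.
  - by move=> c_j1; exfalso; apply: a0_new; exists j1.
  - by move=> c_j2; exfalso; apply: a0_new; exists j2.
have c'0 : c' ord0 = a ord0 by rewrite /c' unlift_none.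
have c'_lift j : c' (lift ord0 j) = c j by rewrite /c' liftK.
move=> x; rewrite !exists_ordS c'0; split=> -[-> | a_tl_x]; try by left.
  by right; have [j <-] := iffLR (eq_c x) a_tl_x; exists j; rewrite c'_lift.
right; apply/eq_c; case: a_tl_x => j <-.
by exists j; rewrite c'_lift.
Qed.

Theorem mainTheorem6 (X : Type) (R : lang_rel X) (L U : pred X) :
  I_separated R ->
  (forall x, U x || L x) -> (forall x, ~~ (U x && L x)) ->
  hom_into_I R (fun x => U x) <->
  (forall n m (s : 'I_n -> X) (t : 'I_m -> X),
     injective s -> injective t ->
     (forall i, U (s i)) -> (forall j, L (t j)) ->
     ~ sqsub R s t).
Proof.
move=> sepR U_or_L U_nand_L; split.
  move=> homU n m s t _ _ U_s L_t s_below_t.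
  have /IrelP /(_ U_s) [j U_tj] := homU _ _ _ _ s_below_t.
  by move: (U_nand_L (t j)); rewrite U_tj L_t.
move=> no_sqsub n m a b Rab; apply/IrelP => U_a.
apply: NNPP => no_U_b.
have L_b j : L (b j).
  by case/orP: (U_or_L (b j)) => // U_bj; case: no_U_b; exists j.
have [n' [s [inj_s eq_s]]] := exists_injective_same_range a.
have [m' [t [inj_t eq_t]]] := exists_injective_same_range b.
apply: (no_sqsub n' m' s t inj_s inj_t).
- by move=> i; have [k <-] : exists k, a k = s i by apply/eq_s; exists i.
- by move=> j; have [k <-] : exists k, b k = t j by apply/eq_t; exists j.
exact: (I_separated_same_range sepR eq_s eq_t Rab).
Qed.
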